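(* Let $W$ be a real $p\times p$ matrix that is similar to a symmetric positive semidefinite matrix and satisfies $\mathrm{tr}(W)>0$. Let $c>0$, $\hat\alpha=c\,\mathrm{tr}(W)$ and $V=(W+\hat\alpha I_p)^{-1}$. Then: (1) $1/(1+c)\le\mathrm{tr}(VW)\le p/(1+cp)$; (2) $p^2/(1+cp)\le\mathrm{tr}(V)\,\mathrm{tr}(W)\le p/c$; (3) $\mathrm{tr}(V^2W)\le\mathrm{tr}(V)/(1+cp)\le\mathrm{tr}(V)$; (4) $\mathrm{tr}(V^3W)\le\mathrm{tr}(V^2)/(1+cp)\le(\mathrm{tr}V)^2/(1+cp)$; (5) $\mathrm{tr}(V^3W)\le\mathrm{tr}(V^2W)\,\mathrm{tr}(V)$; (6) $\mathrm{tr}(V^2)\le(\mathrm{tr}V)^2\big[1-(p-1)c/\{p(1+c)\}\big]$; (7) $\mathrm{tr}(V^3W)\le\mathrm{tr}(V^2W)\,\mathrm{tr}(V)\big[1-(p-1)c/\{p(1+c)\}\big]$; (8) $-c\{\mathrm{tr}(V)\mathrm{tr}(W)-\mathrm{tr}(VW)\}/(1+cp)\le-\mathrm{tr}(VW)+(1+c)\mathrm{tr}(V^2W^2)\le0$.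
   Context: In the paper this is applied with $W=(X-\bar X)(X-\bar X)^\top\Sigma^{-1}$ in the case $n-1\ge p$, where $\bar X$ is the matrix whose columns all equal the sample mean of the columns of $X$ and $\Sigma$ is positive definite; such $W$ is similar to the symmetric positive semidefinite matrix $\Sigma^{-1/2}(X-\bar X)(X-\bar X)^\top\Sigma^{-1/2}$. *)

(* Real p x p matrices are modelled over an arbitrary
   real closed field R (which includes the reals). *)
From HB Require Import structures.
From mathcomp Require Import all_boot all_order all_algebra.
Set Implicit Arguments. Unset Strict Implicit. Unset Printing Implicit Defensive.
Import Order.TTheory GRing.Theory Num.Theory.
Local Open Scope ring_scope.

Definition psd_mx (R : rcfType) (n : nat) (S : 'M[R]_n) : Prop :=
  S^T = S /\ forall x : 'rV[R]_n, 0 <= (x *m S *m x^T) 0 0.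

Definition similar_to_psd (R : rcfType) (n : nat) (W : 'M[R]_n) : Prop :=
  exists (P S : 'M[R]_n), P \in unitmx /\ psd_mx S /\ W = P *m S *m invmx P.

(* Over the complex numbers W is diagonalizable with nonnegative real eigenvalues
   r_i, since it is similar to a positive semidefinite matrix, and the same change
   of basis diagonalizes V, with eigenvalues v_i = 1 / (r_i + c T) where
   T = \sum_i r_i.  Every trace in the statement is thus a sum over the eigenvalues.
   The identity v_i r_i = 1 - c T v_i makes v_i r_i a decreasing function of v_i,
   so Chebyshev's sum inequality for oppositely ordered sequences gives (3), (4)
   and (8).  The AM-HM inequality gives (2) and the upper bound in (1).  Finally
   v_j >= 1 / ((1 + c) T) gives the lower bound in (1) and bounds each v_i by
   k \sum_j v_j, whence (6) and (7). *)

From HB Require Import structures.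
From mathcomp Require Import all_boot all_order all_algebra.
From mathcomp Require Import complex ring lra.
Import Order.TTheory GRing.Theory Num.Theory.
Set Implicit Arguments. Unset Strict Implicit. Unset Printing Implicit Defensive.
Local Open Scope ring_scope.

Lemma invmx_eq (R : comUnitRingType) n (A X : 'M[R]_n) :
  A *m X = 1%:M -> invmx A = X.
Proof.
move=> AX; have [uA _] := mulmx1_unit AX.
by rewrite -[invmx A]mulmx1 -AX mulmxA mulVmx // mul1mx.
Qed.

Lemma invmx_mul (R : comUnitRingType) n (A B : 'M[R]_n) :
  A \in unitmx -> B \in unitmx -> invmx (A *m B) = invmx B *m invmx A.
Proof.
move=> A_unit B_unit; apply: invmx_eq.
by rewrite -mulmxA (mulmxA B) (mulmxV B_unit) mul1mx (mulmxV A_unit).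
Qed.

Lemma mulmx_conj (R : comUnitRingType) n (N A B : 'M[R]_n) : N \in unitmx ->
  invmx N *m A *m N *m (invmx N *m B *m N) = invmx N *m (A *m B) *m N.
Proof. by move=> N_unit; rewrite !mulmxA mulmxK. Qed.

Lemma diag_mx_rowM (R : pzSemiRingType) n (f g : 'I_n -> R) :
  diag_mx (\row_i f i) *m diag_mx (\row_i g i) = diag_mx (\row_i (f i * g i)).
Proof. by rewrite mulmx_diag; congr diag_mx; apply/rowP => i; rewrite !mxE. Qed.

Lemma diag_mx_rowD (R : nmodType) n (f g : 'I_n -> R) :
  diag_mx (\row_i f i) + diag_mx (\row_i g i) = diag_mx (\row_i (f i + g i)).
Proof. by apply/matrixP => i j; rewrite !mxE mulrnDl. Qed.

Lemma diag_mx_row_cst (R : pzSemiRingType) n (a : R) :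
  diag_mx (\row_(i < n) a) = a%:M.
Proof. by apply/matrixP => i j; rewrite !mxE. Qed.

Section DiagonalizedBy.
Variables (R : rcfType) (n : nat) (N : 'M[R[i]]_n).
Hypothesis N_unit : N \in unitmx.

(* The spectral theorem is only available over an algebraically closed field,
   hence the diagonalization of a real matrix is stated for its complexification. *)
Definition diagonalized_by (X : 'M[R]_n) (d : 'I_n -> R) : Prop :=
  map_mx (real_complex R) X =
    invmx N *m map_mx (real_complex R) (diag_mx (\row_i d i)) *m N.

Lemma diagonalizedM X Y d e : diagonalized_by X d -> diagonalized_by Y e ->
  diagonalized_by (X *m Y) (fun i => d i * e i).
Proof.
rewrite /diagonalized_by map_mxM => -> ->.
by rewrite (mulmx_conj _ _ N_unit) -map_mxM diag_mx_rowM.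
Qed.

Lemma diagonalized_scalar a : diagonalized_by a%:M (fun=> a).
Proof.
by rewrite /diagonalized_by diag_mx_row_cst map_scalar_mx scalar_mxC (mulmxKV N_unit).
Qed.

Lemma diagonalizedD X Y d e : diagonalized_by X d -> diagonalized_by Y e ->
  diagonalized_by (X + Y) (fun i => d i + e i).
Proof.
rewrite /diagonalized_by map_mxD => -> ->.
by rewrite -mulmxDl -mulmxDr -map_mxD diag_mx_rowD.
Qed.

Lemma diagonalizedV X d : (forall i, d i != 0) -> diagonalized_by X d ->
  diagonalized_by (invmx X) (fun i => (d i)^-1).
Proof.
move=> d_neq0 dX; rewrite /diagonalized_by map_invmx; apply: invmx_eq.
rewrite dX (mulmx_conj _ _ N_unit) -map_mxM diag_mx_rowM.
have -> : \row_i (d i * (d i)^-1) = \row_i 1 by apply/rowP => i; rewrite !mxE mulfV.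
by rewrite diag_mx_row_cst map_mx1 mulmx1 (mulVmx N_unit).
Qed.

Lemma mxtrace_diagonalized X d : diagonalized_by X d -> \tr X = \sum_i d i.
Proof.
move=> dX; apply: (fmorph_inj (real_complex R)).
rewrite -trace_map_mx dX mxtrace_mulC mulmxA (mulmxV N_unit) mul1mx trace_map_mx.
by rewrite mxtrace_diag; congr (_ _); apply: eq_bigr => i _; rewrite mxE.
Qed.

End DiagonalizedBy.

Lemma diagonalized_conj (R : rcfType) n (N : 'M[R[i]]_n) (P X : 'M[R]_n) d :
    N \in unitmx -> P \in unitmx -> diagonalized_by N X d ->
  diagonalized_by (N *m invmx (map_mx (real_complex R) P)) (P *m X *m invmx P) d.
Proof.
move=> N_unit P_unit XE; rewrite /diagonalized_by !map_mxM map_invmx XE.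
rewrite (invmx_mul N_unit) ?unitmx_inv ?map_unitmx // invmxK.
by rewrite !mulmxA.
Qed.

Lemma Re_sum (R : rcfType) (I : finType) (F : I -> R[i]) :
  complex.Re (\sum_i F i) = \sum_i complex.Re (F i).
Proof. exact: (raddf_sum (@complex.Re R : Rcomplex R -> R)). Qed.

Lemma Re_cform_ge0 (R : rcfType) n (S : 'M[R]_n) (u : 'rV[R[i]]_n) :
    (forall x : 'rV[R]_n, 0 <= (x *m S *m x^T) 0 0) ->
  0 <= complex.Re ((u *m map_mx (real_complex R) S *m (map_mx Num.conj u)^T) 0 0).
Proof.
move=> S_ge0.
have -> : complex.Re ((u *m map_mx (real_complex R) S *m (map_mx Num.conj u)^T) 0 0) =
    (map_mx (@complex.Re R) u *m S *m (map_mx (@complex.Re R) u)^T) 0 0 +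
    (map_mx (@complex.Im R) u *m S *m (map_mx (@complex.Im R) u)^T) 0 0.
  rewrite !mxE Re_sum -big_split /=; apply: eq_bigr => l _.
  rewrite !mxE !mulr_suml Re_sum -big_split /=; apply: eq_bigr => k _.
  by rewrite !mxE; case: (u 0 k) => a b; case: (u 0 l) => a' b' /=; ring.
by rewrite addr_ge0.
Qed.

Lemma psd_diagonalized (R : rcfType) n (S : 'M[R]_n) : psd_mx S ->
  exists2 N : 'M[R[i]]_n, N \in unitmx &
    exists2 d : 'I_n -> R, (forall i, 0 <= d i) & diagonalized_by N S d.
Proof.
move=> [S_sym S_ge0]; set Sc := map_mx (real_complex R) S.
have Sc_sym : Sc \is symmetricmx.
  by apply/is_hermitianmxP; rewrite expr0 scale1r map_mx_id // /Sc map_trmx S_sym.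
have Sc_real : Sc \is a mxOver Num.real.
  by apply/mxOverP => i j; rewrite mxE complex_real.
have /orthomx_spectralP ScE := symmetric_normalmx Sc_sym Sc_real.
have D_real := hermitian_spectral_diag_real (realsym_hermsym Sc_sym Sc_real).
set U := spectralmx Sc in ScE *; set D := spectral_diag Sc in ScE D_real *.
have U_unit : U \in unitmx := spectral_unit Sc.
have DE i : D 0 i = (row i U *m Sc *m (map_mx Num.conj (row i U))^T) 0 0.
  have -> : D 0 i = (U *m Sc *m invmx U) i i.
    by rewrite {1}ScE !mulmxA mulmxV // mul1mx mulmxK // mxE eqxx mulr1n.
  rewrite invmx_unitary ?spectral_unitarymx // !mxE; apply: eq_bigr => k _.
  by rewrite !mxE; congr (_ * _); apply: eq_bigr => l _; rewrite !mxE.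
exists U => //.
exists (fun i => complex.Re (D 0 i)) => [i|]; first by rewrite DE Re_cform_ge0.
rewrite /diagonalized_by -/Sc {1}ScE map_diag_mx.
suff -> : map_mx (real_complex R) (\row_i complex.Re (D 0 i)) = D by [].
by apply/rowP => i; rewrite !mxE RRe_real //; apply: (mxOverP D_real).
Qed.

Lemma similar_to_psd_diagonalized (R : rcfType) n (W : 'M[R]_n) : similar_to_psd W ->
  exists2 N : 'M[R[i]]_n, N \in unitmx &
    exists2 d : 'I_n -> R, (forall i, 0 <= d i) & diagonalized_by N W d.
Proof.
case=> P [S [P_unit [S_psd ->]]]; have [N N_unit [d d_ge0 Sd]] := psd_diagonalized S_psd.
exists (N *m invmx (map_mx (real_complex R) P)).
  by rewrite unitmx_mul N_unit unitmx_inv map_unitmx.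
by exists d => //; apply: diagonalized_conj.
Qed.

Lemma chebyshev_sum_le (R : realFieldType) n (x y : 'I_n -> R) :
    (forall i j, (x i - x j) * (y i - y j) <= 0) ->
  n%:R * \sum_i x i * y i <= (\sum_i x i) * (\sum_i y i).
Proof.
move=> xy_le0; set Sx := \sum_i x i; set Sy := \sum_i y i.
set Sxy := \sum_i x i * y i.
have row_sum i : \sum_j (x i - x j) * (y i - y j) =
    x i * y i *+ n + Sxy - x i * Sy - y i * Sx.
  transitivity (\sum_j (x i * y i + x j * y j - x i * y j - y i * x j)).
    by apply: eq_bigr => j _; ring.
  by rewrite !sumrB big_split /= sumr_const card_ord -!mulr_sumr.
have : \sum_i \sum_j (x i - x j) * (y i - y j) <= 0.
  by apply: sumr_le0 => i _; apply: sumr_le0 => j _; apply: xy_le0.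
rewrite (eq_bigr _ (fun i _ => row_sum i)) !sumrB big_split /= sumr_const.
rewrite card_ord -!mulr_suml sumrMnl mulr_natl -/Sx -/Sy -/Sxy; lra.
Qed.

Lemma harmonic_mean_le (R : realFieldType) n (z : 'I_n -> R) :
  (forall i, 0 < z i) -> n%:R ^+ 2 / \sum_i z i <= \sum_i (z i)^-1.
Proof.
move=> z_gt0; case: n z z_gt0 => [|n] z z_gt0.
  by rewrite !big_ord0 invr0 mulr0.
set S := \sum_i z i; set m := S / n.+1%:R.
have S_gt0 : 0 < S by rewrite /S (bigD1 ord0) //= ltr_wpDr ?sumr_ge0 // => i _; apply: ltW.
have m_gt0 : 0 < m by rewrite divr_gt0.
(* tangent line of the convex function t |-> t^-1 at m *)
have tangent i : m^-1 - (z i - m) / m ^+ 2 <= (z i)^-1.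
  have e : (z i)^-1 - (m^-1 - (z i - m) / m ^+ 2) = (z i - m) ^+ 2 / (m ^+ 2 * z i).
    by field; rewrite !gt_eqF.
  by rewrite -subr_ge0 e divr_ge0 ?sqr_ge0 // ltW // mulr_gt0 ?exprn_gt0.
apply: le_trans (ler_sum _ (fun i _ => tangent i)).
rewrite sumrB -mulr_suml sumrB !sumr_const card_ord -/S.
have -> : S - m *+ n.+1 = 0 by rewrite -mulr_natr /m mulfVK ?subrr ?pnatr_eq0.
by rewrite mul0r subr0 -[m^-1 *+ _]mulr_natr /m invf_div mulrAC.
Qed.

Section ResolventSums.
Variables (R : realFieldType) (p : nat) (r : 'I_p -> R) (c : R).
Hypotheses (r_ge0 : forall i, 0 <= r i) (T_gt0 : 0 < \sum_i r i) (c_gt0 : 0 < c).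

(* r i and v i are the eigenvalues of W and of V *)
Local Notation T := (\sum_i r i).
Local Notation a := (c * \sum_i r i).
Local Notation v i := ((r i + c * \sum_j r j)^-1).
Local Notation pR := (p%:R : R).
Local Notation k := (1 - (pR - 1) * c / (pR * (1 + c))).

Let p_gt0 : 0 < pR.
Proof.
rewrite ltr0n lt0n; apply/eqP => p0; move: T_gt0.
by rewrite big1 ?ltxx // => i; have := ltn_ord i; rewrite {2}p0.
Qed.

Let a_gt0 : 0 < a. Proof. exact: mulr_gt0. Qed.
Let v_gt0 i : 0 < v i. Proof. by rewrite invr_gt0 ltr_wpDl. Qed.
Let cp_gt0 : 0 < 1 + c * pR. Proof. by rewrite ltr_wpDr // ltW // mulr_gt0. Qed.

Let r_le_T i : r i <= T.
Proof. by rewrite (bigD1 i) //= lerDl sumr_ge0. Qed.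

Let vr_ge0 i : 0 <= v i * r i.
Proof. by rewrite mulr_ge0 // ltW. Qed.

Let vr_eq i : v i * r i = 1 - a * v i.
Proof.
rewrite -{2}[r i](addrK a) mulrBr mulVf ?(mulrC (v i)) //.
by rewrite gt_eqF // ltr_wpDl.
Qed.

Lemma sum_vr_eq : \sum_i v i * r i = pR - a * \sum_i v i.
Proof.
by rewrite (eq_bigr _ (fun i _ => vr_eq i)) sumrB sumr_const card_ord -mulr_sumr.
Qed.

Let sum_v_ge0 : 0 <= \sum_i v i.
Proof. by apply: sumr_ge0 => i _; apply: ltW. Qed.

Let v_le_sum_v i : v i <= \sum_j v j.
Proof. by rewrite [leRHS](bigD1 i) //= lerDl sumr_ge0 // => j _; apply: ltW. Qed.

Let a_sum_v_le : a * \sum_i v i <= pR.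
Proof. by rewrite -subr_ge0 -sum_vr_eq sumr_ge0. Qed.

Let one_le_v i : 1 <= (1 + c) * T * v i.
Proof.
rewrite -subr_ge0 (_ : _ - 1 = v i * (T - r i)); first by rewrite mulr_ge0 ?subr_ge0 // ltW.
by rewrite mulrBr vr_eq; ring.
Qed.

Lemma sum_v_mul_T_le : (\sum_i v i) * T <= pR / c.
Proof.
by rewrite ler_pdivlMr // (_ : _ * c = a * \sum_i v i) //; ring.
Qed.

Lemma sum_v_mul_T_ge : pR ^+ 2 / (1 + c * pR) <= (\sum_i v i) * T.
Proof.
have := harmonic_mean_le (fun i => ltr_wpDl (r_ge0 i) a_gt0).
rewrite big_split /= sumr_const card_ord -ler_pdivrMr //.
suff -> : pR ^+ 2 / (T + a *+ p) = pR ^+ 2 / (1 + c * pR) / T by [].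
by rewrite -mulr_natr -mulrA -invfM; congr (_ / _); ring.
Qed.

Lemma sum_vr_le : \sum_i v i * r i <= pR / (1 + c * pR).
Proof.
have := ler_wpM2l (ltW c_gt0) sum_v_mul_T_ge.
have -> : pR / (1 + c * pR) = pR - c * (pR ^+ 2 / (1 + c * pR)).
  by field; rewrite gt_eqF.
rewrite sum_vr_eq (_ : a * _ = c * ((\sum_i v i) * T)); last by ring.
lra.
Qed.

Lemma sum_vr_ge : 1 / (1 + c) <= \sum_i v i * r i.
Proof.
have : T <= (1 + c) * T * \sum_i v i * r i.
  rewrite mulr_sumr; apply: ler_sum => i _.
  by rewrite mulrA -[leLHS]mul1r ler_wpM2r // one_le_v.
move=> h; rewrite ler_pdivrMr; last by rewrite ltr_wpDl // ltW.
rewrite -(ler_pM2l T_gt0) mulr1.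
by rewrite (_ : T * _ = (1 + c) * T * \sum_i v i * r i) //; ring.
Qed.

Lemma sum_mul_vr_le (x : 'I_p -> R) :
    (forall i j, 0 <= (x i - x j) * (v i - v j)) -> 0 <= \sum_i x i ->
  \sum_i x i * (v i * r i) <= (\sum_i x i) / (1 + c * pR).
Proof.
move=> x_v_ge0 Sx_ge0.
have cheb : pR * \sum_i x i * (v i * r i) <= (\sum_i x i) * \sum_i v i * r i.
  apply: chebyshev_sum_le => i j; rewrite !vr_eq.
  rewrite (_ : _ * _ = - (a * ((x i - x j) * (v i - v j)))); last by ring.
  by rewrite oppr_le0 mulr_ge0 // ltW.
have := le_trans cheb (ler_wpM2l Sx_ge0 sum_vr_le).
by rewrite mulrCA ler_pM2l.
Qed.

Lemma sum_vvr_le : \sum_i v i * v i * r i <= (\sum_i v i) / (1 + c * pR).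
Proof.
rewrite (eq_bigr (fun i => v i * (v i * r i))) => [|i _]; last by rewrite mulrA.
by apply: sum_mul_vr_le => // i j; rewrite -expr2 sqr_ge0.
Qed.

Lemma sum_vvvr_le : \sum_i v i * v i * v i * r i <= (\sum_i v i * v i) / (1 + c * pR).
Proof.
rewrite (eq_bigr (fun i => v i * v i * (v i * r i))) => [|i _]; last by rewrite !mulrA.
apply: sum_mul_vr_le => [i j|]; last by apply: sumr_ge0 => i _; rewrite mulr_ge0 // ltW.
rewrite (_ : (v i * v i - v j * v j) * (v i - v j) = (v i + v j) * (v i - v j) ^+ 2);
  last by ring.
by rewrite mulr_ge0 ?sqr_ge0 // addr_ge0 // ltW.
Qed.

Lemma sum_v_div_le : (\sum_i v i) / (1 + c * pR) <= \sum_i v i.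
Proof.
by rewrite ler_pdivrMr // ler_peMr // lerDl mulr_ge0 // ltW.
Qed.

Lemma sum_vv_div_le :
  (\sum_i v i * v i) / (1 + c * pR) <= (\sum_i v i) ^+ 2 / (1 + c * pR).
Proof.
rewrite ler_pM2r ?invr_gt0 // expr2 mulr_suml.
by apply: ler_sum => i _; rewrite ler_pM2l.
Qed.

Lemma sum_vvvr_le_mul : \sum_i v i * v i * v i * r i <= (\sum_i v i * v i * r i) * \sum_i v i.
Proof.
rewrite mulr_suml; apply: ler_sum => i _.
rewrite (_ : v i * v i * v i * r i = v i * v i * r i * v i); last by ring.
by rewrite ler_wpM2l // -mulrA mulr_ge0 // ltW.
Qed.

Lemma v_le_k_sum_v i : v i <= k * \sum_j v j.
Proof.
set L := ((1 + c) * T)^-1.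
have cT_gt0 : 0 < (1 + c) * T by rewrite mulr_gt0 // ltr_wpDl // ltW.
have L_le j : L <= v j by rewrite /L -[_^-1]mulr1 ler_pdivrMl // one_le_v.
have h1 : v i - L <= \sum_j v j - pR * L.
  rewrite (_ : _ - pR * L = \sum_j (v j - L)); last first.
    by rewrite sumrB sumr_const card_ord mulr_natl.
  by rewrite [leRHS](bigD1 i) //= lerDl sumr_ge0 // => j _; rewrite subr_ge0.
have h2 : c * \sum_j v j <= pR / T.
  by rewrite ler_pdivlMr // (_ : c * (\sum_j v j) * T = a * \sum_j v j) //; ring.
set Y := (pR - 1) / (pR * (1 + c)).
have Y_ge0 : 0 <= Y.
  by apply: divr_ge0; [rewrite subr_ge0 ler1n -(ltr0n R) | rewrite mulr_ge0 ?addr_ge0 // ltW].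
have := ler_wpM2l Y_ge0 h2.
rewrite (_ : Y * (pR / T) = (pR - 1) * L); last first.
  by rewrite /Y /L; field; rewrite ?gt_eqF // ltr_wpDl // ltW.
rewrite (_ : k * _ = \sum_j v j - Y * (c * \sum_j v j)); last by rewrite /Y; ring.
lra.
Qed.

Lemma sum_vv_le : \sum_i v i * v i <= (\sum_i v i) ^+ 2 * k.
Proof.
rewrite (_ : _ * k = \sum_i v i * (k * \sum_j v j)); last first.
  by rewrite -mulr_suml; ring.
by apply: ler_sum => i _; rewrite ler_pM2l // v_le_k_sum_v.
Qed.

Lemma sum_vvvr_le_k :
  \sum_i v i * v i * v i * r i <= (\sum_i v i * v i * r i) * (\sum_i v i) * k.
Proof.
rewrite (_ : _ * k = \sum_i v i * v i * r i * (k * \sum_j v j)); last first.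
  by rewrite -mulr_suml; ring.
apply: ler_sum => i _.
rewrite (_ : v i * v i * v i * r i = v i * v i * r i * v i); last by ring.
by rewrite ler_wpM2l ?v_le_k_sum_v // -mulrA mulr_ge0 // ltW.
Qed.

Let vr_term i : - (v i * r i) + (1 + c) * (v i * v i * r i * r i) =
  - c * ((T - r i) * v i * (v i * r i)).
Proof.
rewrite (_ : v i * v i * r i * r i = (v i * r i) ^+ 2); last by ring.
rewrite (_ : (T - r i) * v i = T * v i - v i * r i); last by ring.
by rewrite vr_eq; ring.
Qed.

Let sum_vr_term : - (\sum_i v i * r i) + (1 + c) * (\sum_i v i * v i * r i * r i) =
  - c * \sum_i (T - r i) * v i * (v i * r i).
Proof.
rewrite [(1 + c) * _]mulr_sumr [- c * _]mulr_sumr -sumrN -big_split /=.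
by apply: eq_bigr => i _; rewrite vr_term.
Qed.

Let Tr_v_ge0 i : 0 <= (T - r i) * v i.
Proof. by rewrite mulr_ge0 ?subr_ge0 // ltW. Qed.

Lemma sum_vr_vvrr_le0 : - (\sum_i v i * r i) + (1 + c) * (\sum_i v i * v i * r i * r i) <= 0.
Proof.
rewrite sum_vr_term mulNr oppr_le0 mulr_ge0 ?(ltW c_gt0) //.
by rewrite sumr_ge0 // => i _; rewrite mulr_ge0.
Qed.

Lemma sum_vr_vvrr_ge :
  - c * ((\sum_i v i) * T - \sum_i v i * r i) / (1 + c * pR) <=
  - (\sum_i v i * r i) + (1 + c) * (\sum_i v i * v i * r i * r i).
Proof.
have Sx : \sum_i (T - r i) * v i = (\sum_i v i) * T - \sum_i v i * r i.
  by rewrite mulr_suml -sumrB; apply: eq_bigr => i _; ring.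
rewrite sum_vr_term -Sx !mulNr -mulrA lerN2 ler_pM2l //.
apply: sum_mul_vr_le => [i j|]; last by rewrite sumr_ge0.
rewrite (_ : (T - r i) * v i - (T - r j) * v j = (T + a) * (v i - v j)).
  by rewrite -mulrA mulr_ge0 -?expr2 ?sqr_ge0 // addr_ge0 // ltW.
by rewrite !mulrBl -!(mulrC (v _)) !vr_eq; ring.
Qed.

End ResolventSums.




Theorem lemmaA1 (R : rcfType) (p : nat) (W : 'M[R]_p) (c : R)
    (hW : similar_to_psd W) (htr : 0 < \tr W) (hc : 0 < c) :
  let alpha := c * \tr W in
  let V := invmx (W + alpha%:M) in
  let pR : R := p%:R in
  let k : R := 1 - (pR - 1) * c / (pR * (1 + c)) in
  (* (1) *)
  (1 / (1 + c) <= \tr (V *m W) /\ \tr (V *m W) <= pR / (1 + c * pR)) /\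
  (* (2) *)
  (pR ^+ 2 / (1 + c * pR) <= \tr V * \tr W /\ \tr V * \tr W <= pR / c) /\
  (* (3) *)
  (\tr (V *m V *m W) <= \tr V / (1 + c * pR) /\ \tr V / (1 + c * pR) <= \tr V) /\
  (* (4) *)
  (\tr (V *m V *m V *m W) <= \tr (V *m V) / (1 + c * pR) /\
   \tr (V *m V) / (1 + c * pR) <= (\tr V) ^+ 2 / (1 + c * pR)) /\
  (* (5) *)
  \tr (V *m V *m V *m W) <= \tr (V *m V *m W) * \tr V /\
  (* (6) *)
  \tr (V *m V) <= (\tr V) ^+ 2 * k /\
  (* (7) *)
  \tr (V *m V *m V *m W) <= \tr (V *m V *m W) * \tr V * k /\
  (* (8) *)
  (- c * (\tr V * \tr W - \tr (V *m W)) / (1 + c * pR)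
     <= - \tr (V *m W) + (1 + c) * \tr (V *m V *m W *m W) /\
   - \tr (V *m W) + (1 + c) * \tr (V *m V *m W *m W) <= 0).
Proof.
move=> alpha V pR k.
have [N N_unit [d d_ge0 Wd]] := similar_to_psd_diagonalized hW.
have trW : \tr W = \sum_i d i := mxtrace_diagonalized N_unit Wd.
have T_gt0 : 0 < \sum_i d i by rewrite -trW.
have Vd : diagonalized_by N V (fun i => (d i + c * \sum_j d j)^-1).
  rewrite /V /alpha trW; apply: (diagonalizedV N_unit) => [i|].
    by rewrite gt_eqF // ltr_wpDl // mulr_gt0.
  exact: diagonalizedD Wd (diagonalized_scalar N_unit _).
have VW := diagonalizedM N_unit Vd Wd; have VV := diagonalizedM N_unit Vd Vd.
have VVW := diagonalizedM N_unit VV Wd; have VVWW := diagonalizedM N_unit VVW Wd.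
have VVVW := diagonalizedM N_unit (diagonalizedM N_unit VV Vd) Wd.
rewrite (mxtrace_diagonalized N_unit Vd) (mxtrace_diagonalized N_unit VW).
rewrite (mxtrace_diagonalized N_unit VV) (mxtrace_diagonalized N_unit VVW).
rewrite (mxtrace_diagonalized N_unit VVVW) (mxtrace_diagonalized N_unit VVWW) trW.
by do !split; [ apply: sum_vr_ge | apply: sum_vr_le | apply: sum_v_mul_T_ge
  | apply: sum_v_mul_T_le | apply: sum_vvr_le | apply: sum_v_div_le
  | apply: sum_vvvr_le | apply: sum_vv_div_le | apply: sum_vvvr_le_mul
  | apply: sum_vv_le | apply: sum_vvvr_le_k | apply: sum_vr_vvrr_ge
  | apply: sum_vr_vvrr_le0 ].
Qed.
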